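(* Let $(V,\{\nu_n\})$ be an $L^\infty$-MOS and $S\subseteq V$ an $L^\infty$-MOS ideal. Then $V/S$, with involution $(x+S)^*=x^*+S$ and with $M_n(V/S)_{sa}$ identified with $M_n(V)_{sa}/M_n(S)_{sa}$, together with the maps \[q_n(A+M_n(S)_{sa})=\inf\{\nu_n(B): B\in A+M_n(S)_{sa}\},\qquad A\in M_n(V)_{sa},\] is an $L^\infty$-MOS; in particular each $q_n$ is a proper gauge.
   Context: An $L^\infty$-MOS is a complex $*$-vector space $V$ ($M_n(V)$ with $(x_{ij})^*=(x_{ji}^* )$, self-adjoint part $M_n(V)_{sa}$) with proper gauges $\nu_n:M_n(V)_{sa}\to[0,\infty)$ (subadditive, positively homogeneous, $\nu_n(A)=\nu_n(-A)=0\Rightarrow A=0$) such that $\nu_k(X^*AX)\le\|X\|^2\nu_n(A)$ for scalar $X\in M_{n,k}$ and $\nu_{n+k}(A\oplus B)=\max\{\nu_n(A),\nu_k(B)\}$. For a gauged real vector space $(E,\nu)$, a subspace $T$ is a gauge ideal if whenever $x\in E$ and there are sequences $(a_j),(b_j)\subseteq T$ with $\nu(x-a_j)\to0$ and $\nu(b_j-x)\to0$, then $x\in T$. A self-adjoint subspace $S\subseteq V$ is an $L^\infty$-MOS ideal if $S_{sa}=S\cap V_{sa}$ is a gauge ideal of $(V_{sa},\nu_1)$. *)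

From Stdlib Require Import Reals ClassicalEpsilon.
From mathcomp Require Import ssreflect ssrfun ssrbool eqtype ssrnat seq fintype bigop.

Set Implicit Arguments.
Unset Strict Implicit.
Unset Printing Implicit Defensive.

Local Open Scope R_scope.

Record C := mkC { Re : R; Im : R }.
Definition C0 : C := mkC 0 0.
Definition C1 : C := mkC 1 0.
Definition Cadd (a b : C) : C := mkC (Re a + Re b) (Im a + Im b).
Definition Cmul (a b : C) : C :=
  mkC (Re a * Re b - Im a * Im b) (Re a * Im b + Im a * Re b).
Definition Cconj (a : C) : C := mkC (Re a) (- Im a).
Definition RtoC (t : R) : C := mkC t 0.
Definition Cnorm2 (a : C) : R := Re a * Re a + Im a * Im a.

Record starVS := StarVS {
  car :> Type;
  vzero : car;
  vadd : car -> car -> car;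
  vopp : car -> car;
  vscal : C -> car -> car;
  vstar : car -> car }.

Arguments vzero {s}.

Definition is_starVS (V : starVS) : Prop :=
  (forall x y z : V, vadd x (vadd y z) = vadd (vadd x y) z) /\
  (forall x y : V, vadd x y = vadd y x) /\
  (forall x : V, vadd x vzero = x) /\
  (forall x : V, vadd x (vopp x) = vzero) /\
  (forall x : V, vscal C1 x = x) /\
  (forall (a b : C) (x : V), vscal a (vscal b x) = vscal (Cmul a b) x) /\
  (forall (a b : C) (x : V), vscal (Cadd a b) x = vadd (vscal a x) (vscal b x)) /\
  (forall (a : C) (x y : V), vscal a (vadd x y) = vadd (vscal a x) (vscal a y)) /\
  (forall x y : V, vstar (vadd x y) = vadd (vstar x) (vstar y)) /\
  (forall (a : C) (x : V), vstar (vscal a x) = vscal (Cconj a) (vstar x)) /\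
  (forall x : V, vstar (vstar x) = x).

Definition mat (T : Type) (m n : nat) := 'I_m -> 'I_n -> T.

Section Mat.
Variable V : starVS.

Definition vsum (n : nat) (F : 'I_n -> V) : V := \big[@vadd V / vzero]_(i < n) F i.

Definition madd n (A B : mat V n n) : mat V n n := fun i j => vadd (A i j) (B i j).
Definition mopp n (A : mat V n n) : mat V n n := fun i j => vopp (A i j).
Definition mzero n : mat V n n := fun _ _ => vzero.
Definition mrscal n (t : R) (A : mat V n n) : mat V n n := fun i j => vscal (RtoC t) (A i j).
Definition mstar n (A : mat V n n) : mat V n n := fun i j => vstar (A j i).
Definition is_sa n (A : mat V n n) : Prop := mstar A = A.

(* X^* A X for a scalar matrix X in M_{n,k}(C):
   (X^* A X)_{pq} = sum_{i,j} conj(X_ip) X_jq A_ij *)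
Definition congr n k (X : mat C n k) (A : mat V n n) : mat V k k :=
  fun p q => vsum (fun i => vsum (fun j => vscal (Cmul (Cconj (X i p)) (X j q)) (A i j))).

Definition dsum n k (A : mat V n n) (B : mat V k k) : mat V (n + k) (n + k) :=
  fun i j => match fintype.split i, fintype.split j with
             | inl i', inl j' => A i' j'
             | inr i', inr j' => B i' j'
             | _, _ => vzero
             end.

(* the 1x1 matrix [x] : identification of V with M_1(V) *)
Definition m11 (x : V) : mat V 1 1 := fun _ _ => x.
End Mat.

Definition Csum (n : nat) (F : 'I_n -> C) : C := \big[Cadd / C0]_(i < n) F i.
Definition vnorm (n : nat) (v : 'I_n -> C) : R :=
  sqrt (\big[Rplus / 0]_(i < n) Cnorm2 (v i)).
Definition mvmul n k (X : mat C n k) (v : 'I_k -> C) : 'I_n -> C :=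
  fun i => Csum (fun j => Cmul (X i j) (v j)).
Definition is_opnorm n k (X : mat C n k) (r : R) : Prop :=
  is_lub (fun s => exists v : 'I_k -> C, vnorm v <= 1 /\ s = vnorm (mvmul X v)) r.

(* nu n is only relevant on M_n(V)_sa; indices n range over n >= 1 *)
Definition is_proper_gauge_sa (V : starVS) n (nun : mat V n n -> R) : Prop :=
  (forall A, is_sa A -> 0 <= nun A) /\
  (forall A B, is_sa A -> is_sa B -> nun (madd A B) <= nun A + nun B) /\
  (forall (t : R) A, 0 < t -> is_sa A -> nun (mrscal t A) = t * nun A) /\
  (forall A, is_sa A -> nun A = 0 -> nun (mopp A) = 0 -> A = @mzero V n).

Definition LinfMOS (V : starVS) (nu : forall n, mat V n n -> R) : Prop :=
  is_starVS V /\
  (forall n, (0 < n)%N -> is_proper_gauge_sa (nu n)) /\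
  (forall n k, (0 < n)%N -> (0 < k)%N ->
     forall (X : mat C n k) (A : mat V n n) (r : R), is_sa A -> is_opnorm X r ->
       nu k (congr X A) <= r * r * nu n A) /\
  (forall n k, (0 < n)%N -> (0 < k)%N ->
     forall (A : mat V n n) (B : mat V k k), is_sa A -> is_sa B ->
       nu (n + k)%N (dsum A B) = Rmax (nu n A) (nu k B)).

Definition is_sa_subspace (V : starVS) (S : V -> Prop) : Prop :=
  S vzero /\
  (forall x y, S x -> S y -> S (vadd x y)) /\
  (forall (a : C) x, S x -> S (vscal a x)) /\
  (forall x, S x -> S (vstar x)).

Definition gauge_ideal (V : starVS) (E T : V -> Prop) (nu : V -> R) : Prop :=
  forall x, E x ->
    (exists a b : nat -> V,
        (forall j, T (a j)) /\ (forall j, T (b j)) /\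
        Un_cv (fun j => nu (vadd x (vopp (a j)))) 0 /\
        Un_cv (fun j => nu (vadd (b j) (vopp x))) 0) ->
    T x.

Definition Vsa (V : starVS) (x : V) : Prop := vstar x = x.

Definition LinfMOS_ideal (V : starVS) (nu : forall n, mat V n n -> R) (S : V -> Prop) : Prop :=
  is_sa_subspace S /\
  gauge_ideal (@Vsa V) (fun x => S x /\ Vsa x) (fun x => nu 1%N (m11 x)).

Section Quotient.
Variables (V : starVS) (S : V -> Prop).

Definition cls (x : V) : V -> Prop := fun y => S (vadd x (vopp y)).
Definition Qcar : Type := {P : V -> Prop | exists x, P = cls x}.
Definition Qpi (x : V) : Qcar := exist _ (cls x) (ex_intro _ x erefl).
Definition Qrep (P : Qcar) : V :=
  proj1_sig (constructive_indefinite_description _ (proj2_sig P)).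

Definition quotVS : starVS :=
  @StarVS Qcar (Qpi vzero)
    (fun P Q => Qpi (vadd (Qrep P) (Qrep Q)))
    (fun P => Qpi (vopp (Qrep P)))
    (fun a P => Qpi (vscal a (Qrep P)))
    (fun P => Qpi (vstar (Qrep P))).

Definition lifts n (B : mat V n n) (Ahat : mat quotVS n n) : Prop :=
  forall i j, Qpi (B i j) = Ahat i j.

Definition is_inf (E : R -> Prop) (r : R) : Prop :=
  (forall s, E s -> r <= s) /\ (forall r', (forall s, E s -> r' <= s) -> r' <= r).

(* q_n(A + M_n(S)_sa) = inf { nu_n(B) : B in A + M_n(S)_sa },
   i.e. the infimum over all self-adjoint lifts B of Ahat. *)
Definition qgauge (nu : forall n, mat V n n -> R) n (Ahat : mat quotVS n n) : R :=
  epsilon (inhabits 0)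
    (is_inf (fun s => exists B : mat V n n, is_sa B /\ lifts B Ahat /\ s = nu n B)).
End Quotient.
Arguments qgauge : clear implicits.
Arguments quotVS : clear implicits.

(* Every self-adjoint matrix over V/S has a self-adjoint lift, (B + B^* )/2,
   so q_n is an infimum of gauges nu_n of self-adjoint lifts. Subadditivity,
   homogeneity, the compression inequality and the bound of q on direct sums
   pass from nu to q through nearly optimal lifts; conversely q_n(A) and
   q_k(B) are compressions of q_{n+k}(A (+) B) by coordinate isometries.
   Properness is where the ideal hypothesis enters: if q_n(A) = q_n(-A) = 0
   and B is a self-adjoint lift of A, then for every column X the element
   X^*BX of V_sa is approximated in nu_1, from below and from above, by the
   elements X^*(B - B')X and X^*(B + C')X of S_sa, where B' and C' are lifts
   of A and -A of small gauge; hence X^*BX lies in S. The columns e_i give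
   the diagonal entries of B, and e_i + e_j, e_i + i e_j give the remaining
   entries by polarization, so B has entries in S and A = 0. *)

From HB Require Import structures.
From Stdlib Require Import Reals Lra ClassicalEpsilon FunctionalExtensionality
  PropExtensionality ProofIrrelevance.
From mathcomp Require Import ssreflect ssrfun ssrbool eqtype ssrnat fintype bigop.

Set Implicit Arguments.
Unset Strict Implicit.
Unset Printing Implicit Defensive.
Set Warnings "-notation-overridden -redundant-canonical-projection".

Local Open Scope R_scope.

Lemma C_eq (a b : C) : Re a = Re b -> Im a = Im b -> a = b.
Proof. by case: a; case: b => ? ? ? ? /= -> ->. Qed.

Ltac Cring := apply: C_eq; rewrite /=; ring.

Definition Ci : C := mkC 0 1.

Lemma CaddA : associative Cadd. Proof. by move=> a b c; Cring. Qed.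
Lemma CaddC : commutative Cadd. Proof. by move=> a b; Cring. Qed.
Lemma Cadd0 : left_id C0 Cadd. Proof. by move=> a; Cring. Qed.

HB.instance Definition _ :=
  Monoid.isComLaw.Build R 0 Rplus (fun a b c => esym (Rplus_assoc a b c)) Rplus_comm Rplus_0_l.
HB.instance Definition _ := Monoid.isComLaw.Build C C0 Cadd CaddA CaddC Cadd0.

Notation vsub x y := (vadd x (vopp y)).

Section StarSpace.
Variable V : starVS.
Hypothesis HV : is_starVS V.

Lemma vaddA (x y z : V) : vadd x (vadd y z) = vadd (vadd x y) z.
Proof. by case: HV. Qed.
Lemma vaddC (x y : V) : vadd x y = vadd y x.
Proof. by case: HV => _ []. Qed.
Lemma vaddx0 (x : V) : vadd x vzero = x.
Proof. by case: HV => _ [_ []]. Qed.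
Lemma vaddxN (x : V) : vsub x x = vzero.
Proof. by case: HV => _ [_ [_ []]]. Qed.
Lemma vscal1 (x : V) : vscal C1 x = x.
Proof. by case: HV => _ [_ [_ [_ []]]]. Qed.
Lemma vscalA a b (x : V) : vscal a (vscal b x) = vscal (Cmul a b) x.
Proof. by case: HV => _ [_ [_ [_ [_ []]]]]. Qed.
Lemma vscalDl a b (x : V) : vscal (Cadd a b) x = vadd (vscal a x) (vscal b x).
Proof. by case: HV => _ [_ [_ [_ [_ [_ []]]]]]. Qed.
Lemma vscalDr a (x y : V) : vscal a (vadd x y) = vadd (vscal a x) (vscal a y).
Proof. by case: HV => _ [_ [_ [_ [_ [_ [_ []]]]]]]. Qed.
Lemma vstarD (x y : V) : vstar (vadd x y) = vadd (vstar x) (vstar y).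
Proof. by case: HV => _ [_ [_ [_ [_ [_ [_ [_ []]]]]]]]. Qed.
Lemma vstarZ a (x : V) : vstar (vscal a x) = vscal (Cconj a) (vstar x).
Proof. by case: HV => _ [_ [_ [_ [_ [_ [_ [_ [_ []]]]]]]]]. Qed.
Lemma vstarK (x : V) : vstar (vstar x) = x.
Proof. by case: HV => _ [_ [_ [_ [_ [_ [_ [_ [_ []]]]]]]]]. Qed.

Lemma vadd0x (x : V) : vadd vzero x = x.
Proof. by rewrite vaddC vaddx0. Qed.
Lemma vaddNx (x : V) : vadd (vopp x) x = vzero.
Proof. by rewrite vaddC vaddxN. Qed.

HB.instance Definition _ := Monoid.isComLaw.Build V vzero (@vadd V) vaddA vaddC vadd0x.

Lemma vaddI (x y z : V) : vadd x y = vadd x z -> y = z.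
Proof.
move=> /(congr1 (vadd (vopp x))).
by rewrite !vaddA vaddNx !vadd0x.
Qed.

Lemma vscal0 (x : V) : vscal C0 x = vzero.
Proof.
apply: (@vaddI (vscal C0 x)); rewrite vaddx0 -vscalDl; congr vscal; Cring.
Qed.
Lemma vscalx0 a : vscal a (@vzero V) = vzero.
Proof. by apply: (@vaddI (vscal a vzero)); rewrite vaddx0 -vscalDr vaddx0. Qed.

Lemma voppE (x : V) : vopp x = vscal (RtoC (-1)) x.
Proof.
apply: (@vaddI x); rewrite vaddxN -{1}(vscal1 x) -vscalDl -(vscal0 x).
congr vscal; Cring.
Qed.

Lemma voppD (x y : V) : vopp (vadd x y) = vadd (vopp x) (vopp y).
Proof. by rewrite !voppE vscalDr. Qed.
Lemma voppK (x : V) : vopp (vopp x) = x.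
Proof. by rewrite !voppE vscalA -{2}(vscal1 x); congr vscal; Cring. Qed.
Lemma vopp0 : vopp (@vzero V) = vzero.
Proof. by rewrite voppE vscalx0. Qed.
Lemma vscalN a (x : V) : vscal a (vopp x) = vopp (vscal a x).
Proof. by rewrite !voppE !vscalA; congr vscal; Cring. Qed.
Lemma vstar0 : vstar (@vzero V) = vzero.
Proof. by rewrite -{1}(vscal0 (vstar vzero)) vstarZ vstarK vscalx0. Qed.
Lemma vstarN (x : V) : vstar (vopp x) = vopp (vstar x).
Proof. by rewrite !voppE vstarZ; congr vscal; Cring. Qed.

Lemma vscal_half_double (x : V) : vscal (RtoC (/ 2)) (vadd x x) = x.
Proof.
rewrite -{1 2}(vscal1 x) -vscalDl vscalA -{2}(vscal1 x); congr vscal.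
by apply: C_eq => /=; field.
Qed.

Lemma vaddACA (a b c d : V) : vadd (vadd a b) (vadd c d) = vadd (vadd a c) (vadd b d).
Proof. by rewrite -!vaddA (vaddA b) (vaddC b) -(vaddA c). Qed.

Lemma vsubDD (a b c d : V) : vsub (vadd a b) (vadd c d) = vadd (vsub a c) (vsub b d).
Proof. by rewrite voppD vaddACA. Qed.
Lemma vsubNN (a c : V) : vsub (vopp a) (vopp c) = vopp (vsub a c).
Proof. by rewrite voppD. Qed.
Lemma vsubZZ k (a c : V) : vsub (vscal k a) (vscal k c) = vscal k (vsub a c).
Proof. by rewrite vscalDr vscalN. Qed.
Lemma vsubSS (a c : V) : vsub (vstar a) (vstar c) = vstar (vsub a c).
Proof. by rewrite vstarD vstarN. Qed.
Lemma vsub_trans (a b c : V) : vsub a c = vadd (vsub a b) (vsub b c).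
Proof. by rewrite -vaddA (vaddA (vopp b)) vaddNx vadd0x. Qed.
Lemma vopp_sub (a b : V) : vopp (vsub a b) = vsub b a.
Proof. by rewrite voppD voppK vaddC. Qed.
Lemma vsubKr (x y : V) : vsub x (vsub x y) = y.
Proof. by rewrite vopp_sub (vaddC y) vaddA vaddxN vadd0x. Qed.
Lemma vaddK (x y : V) : vsub (vadd x y) y = x.
Proof. by rewrite -vaddA vaddxN vaddx0. Qed.
Lemma vaddKl (x y : V) : vsub (vadd x y) x = y.
Proof. by rewrite (vaddC x) -vaddA vaddxN vaddx0. Qed.

Lemma vsum_ext n (F G : 'I_n -> V) : (forall i, F i = G i) -> vsum F = vsum G.
Proof. by move=> h; apply: eq_bigr => i _. Qed.
Lemma vsum0 n (F : 'I_n -> V) : (forall i, F i = vzero) -> vsum F = vzero.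
Proof. by move=> h; rewrite /vsum big1 // => i _; apply: h. Qed.
Lemma vsum_add n (F G : 'I_n -> V) :
  vsum (fun i => vadd (F i) (G i)) = vadd (vsum F) (vsum G).
Proof. by rewrite /vsum big_split. Qed.
Lemma vsum_opp n (F : 'I_n -> V) : vopp (vsum F) = vsum (fun i => vopp (F i)).
Proof. exact: (big_morph _ voppD vopp0). Qed.
Lemma vsum_star n (F : 'I_n -> V) : vstar (vsum F) = vsum (fun i => vstar (F i)).
Proof. exact: (big_morph _ vstarD vstar0). Qed.
Lemma vsum_exch n m (F : 'I_n -> 'I_m -> V) :
  vsum (fun i => vsum (fun j => F i j)) = vsum (fun j => vsum (fun i => F i j)).
Proof. by rewrite /vsum exchange_big. Qed.
Lemma vsum1 n (F : 'I_n -> V) j0 :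
  (forall j, j != j0 -> F j = vzero) -> vsum F = F j0.
Proof. by move=> h; rewrite /vsum (bigD1 j0) //= big1 ?vaddx0 // => j /h. Qed.
Lemma vsum2 n (F : 'I_n -> V) a b : a != b ->
  (forall j, j != a -> j != b -> F j = vzero) -> vsum F = vadd (F a) (F b).
Proof.
move=> hab h; rewrite /vsum (bigD1 a) //= (bigD1 b) 1?eq_sym //= big1 ?vaddx0 //.
by move=> j /andP [] /h.
Qed.

End StarSpace.

Section Quotient.
Variable V : starVS.
Hypothesis HV : is_starVS V.
Variable S : V -> Prop.
Hypothesis HS : is_sa_subspace S.

Local Notation QV := (quotVS V S).

Lemma S_0 : S vzero. Proof. by case: HS. Qed.
Lemma S_add x y : S x -> S y -> S (vadd x y). Proof. by case: HS => _ [h _]; apply: h. Qed.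
Lemma S_scal a x : S x -> S (vscal a x). Proof. by case: HS => _ [_ [h _]]; apply: h. Qed.
Lemma S_star x : S x -> S (vstar x). Proof. by case: HS => _ [_ [_ h]]; apply: h. Qed.
Lemma S_opp x : S x -> S (vopp x). Proof. by move=> h; rewrite (voppE HV); apply: S_scal. Qed.
Lemma S_vsum n (F : 'I_n -> V) : (forall i, S (F i)) -> S (vsum F).
Proof. by move=> h; rewrite /vsum; elim/big_ind: _ => //; [exact: S_0 | exact: S_add]. Qed.

Lemma Qpi_eq x y : Qpi S x = Qpi S y <-> S (vsub x y).
Proof.
split.
  move=> /(congr1 (fun P : Qcar S => proj1_sig P y)); rewrite /= /cls => ->.
  by rewrite (vaddxN HV); exact: S_0.
move=> h; apply: subset_eq_compat.
apply: functional_extensionality => z; apply: propositional_extensionality.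
rewrite /cls; split => hz.
  by rewrite (vsub_trans HV y x) -(vopp_sub HV); apply: S_add => //; apply: S_opp.
by rewrite (vsub_trans HV x y); apply: S_add.
Qed.

Lemma Qpi_Qrep (P : QV) : Qpi S (Qrep P) = P.
Proof.
rewrite /Qrep; case: (constructive_indefinite_description _ _) => x hx /=.
by case: P hx => p hp /= hx; apply: subset_eq_compat; rewrite hx.
Qed.

Lemma Qpi_surj (P : QV) : exists x, P = Qpi S x.
Proof. by exists (Qrep P); rewrite Qpi_Qrep. Qed.

Lemma Qrep_Qpi x : S (vsub (Qrep (Qpi S x)) x).
Proof. by apply/Qpi_eq; rewrite Qpi_Qrep. Qed.

Lemma Qpi0 : @vzero QV = Qpi S vzero. Proof. by []. Qed.
Lemma Qpi_add x y : @vadd QV (Qpi S x) (Qpi S y) = Qpi S (vadd x y).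
Proof. by apply/Qpi_eq; rewrite (vsubDD HV); apply: S_add; exact: Qrep_Qpi. Qed.
Lemma Qpi_opp x : @vopp QV (Qpi S x) = Qpi S (vopp x).
Proof. by apply/Qpi_eq; rewrite (vsubNN HV); apply: S_opp; exact: Qrep_Qpi. Qed.
Lemma Qpi_scal a x : @vscal QV a (Qpi S x) = Qpi S (vscal a x).
Proof. by apply/Qpi_eq; rewrite (vsubZZ HV); apply: S_scal; exact: Qrep_Qpi. Qed.
Lemma Qpi_star x : @vstar QV (Qpi S x) = Qpi S (vstar x).
Proof. by apply/Qpi_eq; rewrite (vsubSS HV); apply: S_star; exact: Qrep_Qpi. Qed.

Lemma quot_starVS : is_starVS QV.
Proof.
have surj := Qpi_surj; do !split.
- by move=> P Q R; case: (surj P) => x ->; case: (surj Q) => y ->; case: (surj R) => z ->;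
    rewrite !Qpi_add (vaddA HV).
- by move=> P Q; case: (surj P) => x ->; case: (surj Q) => y ->; rewrite !Qpi_add (vaddC HV).
- by move=> P; case: (surj P) => x ->; rewrite Qpi0 Qpi_add (vaddx0 HV).
- by move=> P; case: (surj P) => x ->; rewrite Qpi_opp Qpi_add (vaddxN HV).
- by move=> P; case: (surj P) => x ->; rewrite Qpi_scal (vscal1 HV).
- by move=> a b P; case: (surj P) => x ->; rewrite !Qpi_scal (vscalA HV).
- by move=> a b P; case: (surj P) => x ->; rewrite !Qpi_scal Qpi_add (vscalDl HV).
- by move=> a P Q; case: (surj P) => x ->; case: (surj Q) => y ->;
    rewrite Qpi_add !Qpi_scal Qpi_add (vscalDr HV).
- by move=> P Q; case: (surj P) => x ->; case: (surj Q) => y ->;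
    rewrite Qpi_add !Qpi_star Qpi_add (vstarD HV).
- by move=> a P; case: (surj P) => x ->; rewrite Qpi_scal !Qpi_star Qpi_scal (vstarZ HV).
- by move=> P; case: (surj P) => x ->; rewrite !Qpi_star (vstarK HV).
Qed.

Lemma Qpi_vsum n (F : 'I_n -> V) : Qpi S (vsum F) = @vsum QV n (fun i => Qpi S (F i)).
Proof. by apply: (big_morph (Qpi S)) => [x y|]; rewrite ?Qpi_add. Qed.

End Quotient.

Lemma mat_ext (T : Type) m n (A B : mat T m n) : (forall i j, A i j = B i j) -> A = B.
Proof.
by move=> h; apply: functional_extensionality => i; apply: functional_extensionality.
Qed.

Definition col2 n (i j : 'I_n) (c : C) : mat C n 1 :=
  fun a _ => if a == i then C1 else if a == j then c else C0.
Definition incl m N (f : 'I_m -> 'I_N) : mat C N m :=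
  fun i p => if i == f p then C1 else C0.

Section Matrices.
Variable W : starVS.
Hypothesis HW : is_starVS W.

Lemma sa_entry n (A : mat W n n) : is_sa A -> forall i j, vstar (A j i) = A i j.
Proof. by move=> h i j; have := congr1 (fun M => M i j) h. Qed.
Lemma sa_of_entries n (A : mat W n n) : (forall i j, vstar (A j i) = A i j) -> is_sa A.
Proof. exact: mat_ext. Qed.

Lemma sa_madd n (A B : mat W n n) : is_sa A -> is_sa B -> is_sa (madd A B).
Proof.
by move=> /sa_entry hA /sa_entry hB; apply: sa_of_entries => i j; rewrite /madd (vstarD HW) hA hB.
Qed.
Lemma sa_mopp n (A : mat W n n) : is_sa A -> is_sa (mopp A).
Proof. by move=> /sa_entry hA; apply: sa_of_entries => i j; rewrite /mopp (vstarN HW) hA. Qed.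
Lemma sa_mrscal n t (A : mat W n n) : is_sa A -> is_sa (mrscal t A).
Proof.
move=> /sa_entry hA; apply: sa_of_entries => i j; rewrite /mrscal (vstarZ HW) hA.
by congr vscal; Cring.
Qed.
Lemma sa_congr n k (X : mat C n k) (A : mat W n n) : is_sa A -> is_sa (congr X A).
Proof.
move=> /sa_entry hA; apply: sa_of_entries => p q; rewrite /congr (vsum_star HW) (vsum_exch HW).
apply: vsum_ext => i; rewrite (vsum_star HW); apply: vsum_ext => j.
by rewrite (vstarZ HW) hA; congr vscal; Cring.
Qed.
Lemma sa_dsum n k (A : mat W n n) (B : mat W k k) :
  is_sa A -> is_sa B -> is_sa (dsum A B).
Proof.
move=> /sa_entry hA /sa_entry hB; apply: sa_of_entries => i j; rewrite /dsum.
by case: (fintype.split i) => i'; case: (fintype.split j) => j' //; exact: (vstar0 HW).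
Qed.

Lemma mrscalA n s t (A : mat W n n) : mrscal s (mrscal t A) = mrscal (s * t) A.
Proof. by apply: mat_ext => p q; rewrite /mrscal (vscalA HW); congr vscal; Cring. Qed.
Lemma mrscal1 n (A : mat W n n) : mrscal 1 A = A.
Proof. by apply: mat_ext => p q; rewrite /mrscal -{2}(vscal1 HW (A p q)). Qed.

Lemma m11_entry (M : mat W 1 1) : m11 (M ord0 ord0) = M.
Proof. by apply: mat_ext => p q; rewrite !ord1. Qed.

Lemma madd_mopp n (A : mat W n n) : madd A (mopp A) = @mzero W n.
Proof. by apply: mat_ext => i j; exact: (vaddxN HW). Qed.

Lemma congr_madd n k (X : mat C n k) (A B : mat W n n) :
  congr X (madd A B) = madd (congr X A) (congr X B).
Proof.
apply: mat_ext => p q; rewrite /congr /madd -(vsum_add HW); apply: vsum_ext => i.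
by rewrite -(vsum_add HW); apply: vsum_ext => j; exact: (vscalDr HW).
Qed.
Lemma congr_mopp n k (X : mat C n k) (A : mat W n n) :
  congr X (mopp A) = mopp (congr X A).
Proof.
apply: mat_ext => p q; rewrite /congr /mopp (vsum_opp HW); apply: vsum_ext => i.
by rewrite (vsum_opp HW); apply: vsum_ext => j; exact: (vscalN HW).
Qed.

Lemma congr_incl m N (f : 'I_m -> 'I_N) (M : mat W N N) : injective f ->
  forall p q, congr (incl f) M p q = M (f p) (f q).
Proof.
move=> finj p q; rewrite /congr (@vsum1 _ HW _ _ (f p)) => [|i hi].
  rewrite (@vsum1 _ HW _ _ (f q)) => [|j hj].
    by rewrite /incl !eqxx -{2}(vscal1 HW (M (f p) (f q))); congr vscal; Cring.
  by rewrite /incl (negbTE hj) eqxx -(vscal0 HW (M (f p) j)); congr vscal; Cring.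
apply: (vsum0 HW) => j; rewrite /incl (negbTE hi) -(vscal0 HW (M i j)).
by congr vscal; Cring.
Qed.

Lemma congr_dsum_l n k (A : mat W n n) (B : mat W k k) :
  congr (incl (@lshift n k)) (dsum A B) = A.
Proof.
apply: mat_ext => p q; rewrite congr_incl; last exact: lshift_inj.
by rewrite /dsum !(@unsplitK n k (inl _)).
Qed.
Lemma congr_dsum_r n k (A : mat W n n) (B : mat W k k) :
  congr (incl (@rshift n k)) (dsum A B) = B.
Proof.
apply: mat_ext => p q; rewrite congr_incl; last exact: rshift_inj.
by rewrite /dsum !(@unsplitK n k (inr _)).
Qed.

Lemma congr_col2 n (M : mat W n n) i j c : i != j ->
  congr (col2 i j c) M ord0 ord0 =
  vadd (vadd (M i i) (vscal c (M i j)))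
       (vadd (vscal (Cconj c) (M j i)) (vscal (Cmul (Cconj c) c) (M j j))).
Proof.
move=> hij; have hji : j != i by rewrite eq_sym.
have coef_i : col2 i j c i ord0 = C1 by rewrite /col2 eqxx.
have coef_j : col2 i j c j ord0 = c by rewrite /col2 (negbTE hji) eqxx.
have coef_0 b : b != i -> b != j -> col2 i j c b ord0 = C0.
  by move=> hbi hbj; rewrite /col2 (negbTE hbi) (negbTE hbj).
have term0 a b (z : W) : col2 i j c a ord0 = C0 \/ col2 i j c b ord0 = C0 ->
    vscal (Cmul (Cconj (col2 i j c a ord0)) (col2 i j c b ord0)) z = vzero.
  by move=> [] ->; rewrite -(vscal0 HW z); congr vscal; Cring.
rewrite /congr (vsum2 HW hij) => [|a hai haj]; last first.
  by apply: (vsum0 HW) => b; apply: term0; left; apply: coef_0.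
rewrite !(vsum2 HW hij) => [|b hbi hbj|b hbi hbj]; try by apply: term0; right; apply: coef_0.
have e11 : Cmul (Cconj C1) C1 = C1 by Cring.
rewrite coef_i coef_j e11 (vscal1 HW).
by congr (vadd (vadd _ _) (vadd _ _)); congr vscal; Cring.
Qed.

End Matrices.

Section Lifts.
Variable V : starVS.
Hypothesis HV : is_starVS V.
Variable S : V -> Prop.
Hypothesis HS : is_sa_subspace S.
Local Notation QV := (quotVS V S).

Lemma lifts_madd n (B C : mat V n n) (A D : mat QV n n) :
  lifts B A -> lifts C D -> lifts (madd B C) (madd A D).
Proof. by move=> hB hC i j; rewrite /madd -(Qpi_add HV HS) hB hC. Qed.
Lemma lifts_mrscal n t (B : mat V n n) (A : mat QV n n) :
  lifts B A -> lifts (mrscal t B) (mrscal t A).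
Proof. by move=> hB i j; rewrite /mrscal -(Qpi_scal HV HS) hB. Qed.
Lemma lifts_congr n k (X : mat C n k) (B : mat V n n) (A : mat QV n n) :
  lifts B A -> lifts (congr X B) (congr X A).
Proof.
move=> hB p q; rewrite /congr (Qpi_vsum HV HS); apply: (@vsum_ext QV) => i.
by rewrite (Qpi_vsum HV HS); apply: vsum_ext => j; rewrite -(Qpi_scal HV HS) hB.
Qed.
Lemma lifts_dsum n k (B : mat V n n) (B' : mat V k k) (A : mat QV n n) (A' : mat QV k k) :
  lifts B A -> lifts B' A' -> lifts (dsum B B') (dsum A A').
Proof.
by move=> hB hB' i j; rewrite /dsum; case: (fintype.split i) => i'; case: (fintype.split j).
Qed.

Lemma lifts_sub_S n (B C : mat V n n) (A : mat QV n n) :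
  lifts B A -> lifts C A -> forall i j, S (vsub (B i j) (C i j)).
Proof. by move=> hB hC i j; apply/(Qpi_eq HV HS); rewrite hB hC. Qed.
Lemma lifts_mzero_S n (B : mat V n n) : lifts B (@mzero QV n) -> forall i j, S (B i j).
Proof.
by move=> hB i j; rewrite -(vaddx0 HV (B i j)) -(vopp0 HV); apply/(Qpi_eq HV HS); exact: hB.
Qed.
Lemma lifts_S_mzero n (B : mat V n n) (A : mat QV n n) :
  lifts B A -> (forall i j, S (B i j)) -> A = @mzero QV n.
Proof.
move=> hB hS; apply: mat_ext => i j; rewrite -hB /mzero Qpi0.
by apply/(Qpi_eq HV HS); rewrite (vopp0 HV) (vaddx0 HV).
Qed.

Lemma sa_lift_ex n (A : mat QV n n) : is_sa A -> exists B : mat V n n, is_sa B /\ lifts B A.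
Proof.
move=> hA; pose B i j := Qrep (A i j).
have hB : lifts B A by move=> i j; exact: Qpi_Qrep.
exists (mrscal (/ 2) (madd B (mstar B))); split.
  apply: (sa_mrscal HV); apply: sa_of_entries => i j.
  by rewrite /madd /mstar (vstarD HV) (vstarK HV) (vaddC HV).
move=> i j; rewrite /mrscal /madd /mstar -(Qpi_scal HV HS) -(Qpi_add HV HS) -(Qpi_star HV HS).
by rewrite !hB (sa_entry hA) (vscal_half_double (quot_starVS HV HS)).
Qed.

End Lifts.

Section CompressionsInSubspace.
Variable W : starVS.
Hypothesis HW : is_starVS W.
Variable S : W -> Prop.
Hypothesis HS : is_sa_subspace S.

Lemma S_congr n k (X : mat C n k) (M : mat W n n) :
  (forall i j, S (M i j)) -> forall p q, S (congr X M p q).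
Proof.
move=> hM p q; apply: (S_vsum HS) => i; apply: (S_vsum HS) => j.
by apply: (S_scal HS); exact: hM.
Qed.

Lemma S_polarize (a u w d : W) : S a -> S d ->
  (forall c, c = C1 \/ c = Ci ->
     S (vadd (vadd a (vscal c u)) (vadd (vscal (Cconj c) w) (vscal (Cmul (Cconj c) c) d)))) ->
  S u.
Proof.
move=> ha hd hT.
have lin c : c = C1 \/ c = Ci -> S (vadd (vscal c u) (vscal (Cconj c) w)).
  move=> hc; have := S_add HS (hT c hc) (S_opp HW HS (S_add HS ha hd)).
  have -> : Cmul (Cconj c) c = C1 by case: hc => ->; Cring.
  by rewrite (vscal1 HW) (vsubDD HW) (vaddKl HW) (vaddK HW).
have huw := lin C1 (or_introl erefl).
have huw' := S_scal HS (Cconj Ci) (lin Ci (or_intror erefl)).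
have eC1 : Cconj C1 = C1 by Cring.
rewrite eC1 !(vscal1 HW) in huw.
rewrite (vscalDr HW) !(vscalA HW) in huw'.
have eCi : Cmul (Cconj Ci) Ci = C1 by Cring.
have eCi' : Cmul (Cconj Ci) (Cconj Ci) = RtoC (-1) by Cring.
rewrite eCi eCi' (vscal1 HW) -(voppE HW) in huw'.
have := S_add HS huw huw'; rewrite (vaddACA HW) (vaddxN HW) (vaddx0 HW).
by move/(S_scal HS (RtoC (/ 2))); rewrite (vscal_half_double HW).
Qed.

Lemma S_entries_of_col_congr n (M : mat W n n) :
  (forall X : mat C n 1, S (congr X M ord0 ord0)) -> forall i j, S (M i j).
Proof.
move=> hX.
have diag i : S (M i i).
  by have := hX (incl (fun _ : 'I_1 => i)); rewrite (congr_incl HW) // => p q _; rewrite !ord1.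
move=> i j; case: (eqVneq i j) => [<- | hij]; first exact: diag.
apply: (S_polarize (w := M j i) (diag i) (diag j)) => c _.
by have := hX (col2 i j c); rewrite (congr_col2 HW).
Qed.

End CompressionsInSubspace.

Lemma big_single (T : Type) (idx : T) (op : Monoid.com_law idx) n (F : 'I_n -> T) j0 :
  (forall j, j != j0 -> F j = idx) -> \big[op/idx]_(j < n) F j = F j0.
Proof. by move=> h; rewrite (bigD1 j0) //= big1 ?Monoid.mulm1 // => j /h. Qed.

Lemma is_inf_ex (E : R -> Prop) :
  (exists s, E s) -> (forall s, E s -> 0 <= s) -> exists r, is_inf E r.
Proof.
move=> [s0 hs0] hpos.
have hb : bound (fun y => E (- y)) by exists 0 => y /hpos; lra.
have hne : exists y, E (- y) by exists (- s0); rewrite Ropp_involutive.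
case: (completeness _ hb hne) => m [hub hlub]; exists (- m); split.
  move=> s hs; suff : - s <= m by lra.
  by apply: hub; rewrite Ropp_involutive.
move=> r' hr'; suff : m <= - r' by lra.
by apply: hlub => y /hr'; lra.
Qed.

Lemma opnorm_ex n k (X : mat C n k) M :
  (forall v, vnorm v <= 1 -> vnorm (mvmul X v) <= M) ->
  exists r, is_opnorm X r /\ 0 <= r /\ r <= M.
Proof.
move=> hM; pose E s := exists v : 'I_k -> C, vnorm v <= 1 /\ s = vnorm (mvmul X v).
have hb : bound E by exists M => s [v [hv ->]]; apply: hM.
have v0_norm : vnorm (fun _ : 'I_k => C0) = 0.
  by rewrite /vnorm big1 ?sqrt_0 // => i _; rewrite /Cnorm2 /=; ring.
have hne : E (vnorm (mvmul X (fun _ => C0))) by exists (fun _ => C0); rewrite v0_norm; lra.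
case: (completeness _ hb (ex_intro _ _ hne)) => r [hub hlub].
exists r; split; first by [].
split; first exact: Rle_trans (sqrt_pos _) (hub _ hne).
by apply: hlub => s [v [hv ->]]; exact: hM.
Qed.

Lemma Cnorm2_ge0 a : 0 <= Cnorm2 a.
Proof. rewrite /Cnorm2; nra. Qed.

Lemma col_opnorm n (X : mat C n 1) : exists r, is_opnorm X r.
Proof.
pose s := \big[Rplus/0]_(i < n) Cnorm2 (X i ord0).
suff hX v : vnorm v <= 1 -> vnorm (mvmul X v) <= sqrt s.
  by have [r [hr _]] := opnorm_ex hX; exists r.
move=> hv; rewrite /vnorm; apply: sqrt_le_1_alt.
have hs : 0 <= s by elim/big_ind: s => //; [lra | move=> *; lra | move=> *; exact: Cnorm2_ge0].
have hv0 : Cnorm2 (v ord0) <= 1.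
  move: hv; rewrite /vnorm big_ord1 => hv.
  by rewrite -(sqrt_sqrt _ (Cnorm2_ge0 (v ord0))); have := sqrt_pos (Cnorm2 (v ord0)); nra.
rewrite (eq_bigr (fun i => Cnorm2 (X i ord0) * Cnorm2 (v ord0))) => [|i _]; last first.
  by rewrite /mvmul /Csum big_ord1 /Cnorm2 /=; ring.
rewrite -(big_morph (fun x => x * Cnorm2 (v ord0))
  (id1 := 0) (op1 := Rplus) (id2 := 0) (op2 := Rplus)) => [|x y|]; rewrite -/s; try ring.
by have := Cnorm2_ge0 (v ord0); nra.
Qed.

Lemma incl_vnorm m N (f : 'I_m -> 'I_N) : injective f ->
  forall v, vnorm (mvmul (incl f) v) = vnorm v.
Proof.
move=> finj v; rewrite /vnorm; congr sqrt.
have e i : Cnorm2 (mvmul (incl f) v i) =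
    \big[Rplus/0]_(p < m) (if i == f p then Cnorm2 (v p) else 0).
  rewrite /mvmul /Csum /incl.
  case: (pickP (fun p => i == f p)) => [p0 /eqP hp0 | hnone].
    have other j : j != p0 -> (i == f j) = false by rewrite hp0 (inj_eq finj) eq_sym => /negbTE.
    rewrite (@big_single _ _ _ _ _ p0) => [|j /other ->]; last by Cring.
    rewrite (@big_single _ _ _ _ _ p0) => [|j /other -> //].
    by rewrite hp0 eqxx /Cnorm2 /=; ring.
  rewrite !big1 => [|p _|p _]; rewrite ?hnone //; first by rewrite /Cnorm2 /=; ring.
  by Cring.
rewrite (eq_bigr _ (fun i _ => e i)) exchange_big /=; apply: eq_bigr => p _.
by rewrite (@big_single _ _ _ _ _ (f p)) ?eqxx // => j /negbTE ->.
Qed.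

Lemma incl_opnorm m N (f : 'I_m -> 'I_N) : injective f ->
  exists r, is_opnorm (incl f) r /\ 0 <= r /\ r <= 1.
Proof. by move=> finj; apply: opnorm_ex => v; rewrite incl_vnorm. Qed.

Lemma Un_cv_lt_RinvN (u : nat -> R) : (forall m, Rabs (u m) < RinvN m) -> Un_cv u 0.
Proof.
move=> hu eps heps; have [N hN] := RinvN_cv heps.
exists N => m hm; rewrite /R_dist Rminus_0_r.
have := hN m hm; rewrite /R_dist Rminus_0_r Rabs_right; last first.
  by apply: Rle_ge; apply: Rlt_le; exact: (cond_pos (RinvN m)).
by have := hu m; lra.
Qed.

Lemma gauge_ideal_approx (V : starVS) (E T : V -> Prop) (nu : V -> R) x :
  gauge_ideal E T nu -> E x ->
  (forall eps, 0 < eps -> exists a, T a /\ Rabs (nu (vsub x a)) < eps) ->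
  (forall eps, 0 < eps -> exists b, T b /\ Rabs (nu (vsub b x)) < eps) ->
  T x.
Proof.
move=> hT hx ha hb; apply: hT => //.
have [a ha_spec] := choice (fun m a => T a /\ Rabs (nu (vsub x a)) < RinvN m)
  (fun m => ha _ (cond_pos (RinvN m))).
have [b hb_spec] := choice (fun m b => T b /\ Rabs (nu (vsub b x)) < RinvN m)
  (fun m => hb _ (cond_pos (RinvN m))).
exists a, b; do !split.
- by move=> m; case: (ha_spec m).
- by move=> m; case: (hb_spec m).
- by apply: Un_cv_lt_RinvN => m; case: (ha_spec m).
- by apply: Un_cv_lt_RinvN => m; case: (hb_spec m).
Qed.

Section QuotientGauge.
Variable V : starVS.
(* Keeps the size argument of [nu] explicit, as in [nu n A]. *)
Unset Implicit Arguments.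
Variable nu : forall n, mat V n n -> R.
Set Implicit Arguments.
Variable S : V -> Prop.
Hypothesis HL : LinfMOS nu.
Hypothesis HI : LinfMOS_ideal nu S.

Let HV : is_starVS V := proj1 HL.
Let HS : is_sa_subspace S := proj1 HI.
Local Notation QV := (quotVS V S).
Let HQ : is_starVS QV := quot_starVS HV HS.
Local Notation q := (qgauge V S nu).

Lemma nu_ge0 n (A : mat V n n) : (0 < n)%N -> is_sa A -> 0 <= nu n A.
Proof. by move=> hn hA; case: (proj1 (proj2 HL) n hn) => h _; apply: h. Qed.
Lemma nu_add n (A B : mat V n n) : (0 < n)%N -> is_sa A -> is_sa B ->
  nu n (madd A B) <= nu n A + nu n B.
Proof. by move=> hn hA hB; case: (proj1 (proj2 HL) n hn) => _ [h _]; apply: h. Qed.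
Lemma nu_scal n t (A : mat V n n) : (0 < n)%N -> 0 < t -> is_sa A ->
  nu n (mrscal t A) = t * nu n A.
Proof. by move=> hn ht hA; case: (proj1 (proj2 HL) n hn) => _ [_ [h _]]; apply: h. Qed.
Lemma nu_congr n k (X : mat C n k) (A : mat V n n) r : (0 < n)%N -> (0 < k)%N ->
  is_sa A -> is_opnorm X r -> nu k (congr X A) <= r * r * nu n A.
Proof. by move=> hn hk; exact: (proj1 (proj2 (proj2 HL)) n k hn hk X A r). Qed.
Lemma nu_dsum n k (A : mat V n n) (B : mat V k k) : (0 < n)%N -> (0 < k)%N ->
  is_sa A -> is_sa B -> nu (n + k)%N (dsum A B) = Rmax (nu n A) (nu k B).
Proof. by move=> hn hk; exact: (proj2 (proj2 (proj2 HL)) n k hn hk A B). Qed.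

Definition lift_gauges n (A : mat QV n n) (s : R) : Prop :=
  exists B : mat V n n, is_sa B /\ lifts B A /\ s = nu n B.

Section FixedSize.
Variable n : nat.
Hypothesis hn : (0 < n)%N.

Lemma q_spec (A : mat QV n n) : is_sa A -> is_inf (lift_gauges A) (q n A).
Proof.
move=> hA; have [B [hB hl]] := sa_lift_ex HV HS hA.
have [r hr] : exists r, is_inf (lift_gauges A) r.
  apply: is_inf_ex; first by exists (nu n B), B.
  by move=> s [B' [hB' [_ ->]]]; apply: nu_ge0.
by apply: epsilon_spec; exists r.
Qed.

Lemma q_le (A : mat QV n n) (B : mat V n n) :
  is_sa A -> is_sa B -> lifts B A -> q n A <= nu n B.
Proof. by move=> hA hB hl; case: (q_spec hA) => h _; apply: h; exists B. Qed.

Lemma q_glb (A : mat QV n n) r : is_sa A ->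
  (forall B : mat V n n, is_sa B -> lifts B A -> r <= nu n B) -> r <= q n A.
Proof. by move=> hA h; case: (q_spec hA) => _; apply => s [B [hB [hl ->]]]; exact: h. Qed.

Lemma q_approx (A : mat QV n n) eps : is_sa A -> 0 < eps ->
  exists B : mat V n n, is_sa B /\ lifts B A /\ nu n B < q n A + eps.
Proof.
move=> hA he; apply: NNPP => hno.
suff : q n A + eps <= q n A by lra.
by apply: q_glb => // B hB hl; apply: Rnot_lt_le => hlt; apply: hno; exists B.
Qed.

Lemma q_ge0 (A : mat QV n n) : is_sa A -> 0 <= q n A.
Proof. by move=> hA; apply: q_glb => // B hB _; exact: nu_ge0. Qed.

Lemma q_glb_scaled (A : mat QV n n) c x : is_sa A -> 0 <= c ->
  (forall B : mat V n n, is_sa B -> lifts B A -> x <= c * nu n B) -> x <= c * q n A.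
Proof.
move=> hA hc h; apply: Rle_plus_epsilon => e he.
have hd : 0 < e / (c + 1) by apply: Rdiv_lt_0_compat; lra.
have [B [hB [hl hlt]]] := q_approx hA hd.
have hcd : c * (e / (c + 1)) <= e.
  by rewrite /Rdiv -Rmult_assoc; apply: (Rmult_le_reg_r (c + 1)); [lra | field_simplify; lra].
by have := h B hB hl; nra.
Qed.

Lemma q_add (A B : mat QV n n) : is_sa A -> is_sa B -> q n (madd A B) <= q n A + q n B.
Proof.
move=> hA hB; apply: Rle_plus_epsilon => e he.
have he2 : 0 < e / 2 by lra.
have [B1 [hB1 [l1 h1]]] := q_approx hA he2.
have [B2 [hB2 [l2 h2]]] := q_approx hB he2.
have := q_le (sa_madd HQ hA hB) (sa_madd HV hB1 hB2) (lifts_madd HV HS l1 l2).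
by have := nu_add hn hB1 hB2; lra.
Qed.

Lemma q_scal_le t (A : mat QV n n) : 0 < t -> is_sa A -> q n (mrscal t A) <= t * q n A.
Proof.
move=> ht hA; apply: q_glb_scaled => // [|B hB hl]; first lra.
rewrite -nu_scal //; apply: q_le; first exact: (sa_mrscal HQ).
  exact: (sa_mrscal HV).
exact: (lifts_mrscal HV HS).
Qed.

Lemma q_scal t (A : mat QV n n) : 0 < t -> is_sa A -> q n (mrscal t A) = t * q n A.
Proof.
move=> ht hA; apply: Rle_antisym; first exact: q_scal_le.
have hit : 0 < / t by apply: Rinv_0_lt_compat.
have := q_scal_le hit (sa_mrscal HQ t hA).
rewrite (mrscalA HQ) Rinv_l ?(mrscal1 HQ); last lra.
move=> h; apply: (Rmult_le_reg_l (/ t)) => //.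
by rewrite -Rmult_assoc Rinv_l ?Rmult_1_l //; lra.
Qed.

End FixedSize.

Lemma q_congr n k (X : mat C n k) (A : mat QV n n) r : (0 < n)%N -> (0 < k)%N ->
  is_sa A -> is_opnorm X r -> q k (congr X A) <= r * r * q n A.
Proof.
move=> hn hk hA hr; apply: (q_glb_scaled hn) => // [|B hB hl]; first nra.
apply: Rle_trans (nu_congr hn hk hB hr).
apply: (q_le hk); [exact: (sa_congr HQ) | exact: (sa_congr HV) | exact: (lifts_congr HV HS)].
Qed.

Lemma q_incl_le m N (f : 'I_m -> 'I_N) (A : mat QV N N) : (0 < m)%N -> (0 < N)%N ->
  injective f -> is_sa A -> q m (congr (incl f) A) <= q N A.
Proof.
move=> hm hN finj hA; have [r [hr [r0 r1]]] := incl_opnorm finj.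
have hr2 : r * r <= 1 by nra.
have := q_congr hN hm hA hr; have := q_ge0 hN hA; nra.
Qed.

Lemma q_dsum n k (A : mat QV n n) (B : mat QV k k) : (0 < n)%N -> (0 < k)%N ->
  is_sa A -> is_sa B -> q (n + k)%N (dsum A B) = Rmax (q n A) (q k B).
Proof.
move=> hn hk hA hB; have hnk : (0 < n + k)%N by rewrite addn_gt0 hn.
have hAB := sa_dsum HQ hA hB.
apply: Rle_antisym.
  apply: Rle_plus_epsilon => e he.
  have [B1 [hB1 [l1 h1]]] := q_approx hn hA he.
  have [B2 [hB2 [l2 h2]]] := q_approx hk hB he.
  apply: Rle_trans (q_le hnk hAB (sa_dsum HV hB1 hB2) (lifts_dsum l1 l2)) _.
  rewrite nu_dsum //; apply: Rmax_lub.
    by have := Rmax_l (q n A) (q k B); lra.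
  by have := Rmax_r (q n A) (q k B); lra.
apply: Rmax_lub.
  by rewrite -{1}(congr_dsum_l HQ A B); apply: q_incl_le => //; exact: lshift_inj.
by rewrite -{1}(congr_dsum_r HQ A B); apply: q_incl_le => //; exact: rshift_inj.
Qed.

Lemma q_null_col_congr_small n (A : mat QV n n) (X : mat C n 1) eps :
  (0 < n)%N -> is_sa A -> q n A = 0 -> 0 < eps ->
  exists B : mat V n n, is_sa B /\ lifts B A /\ Rabs (nu 1%N (congr X B)) < eps.
Proof.
move=> hn hA hq he; have [r hr] := col_opnorm X.
have hd : 0 < eps / (r * r + 1) by apply: Rdiv_lt_0_compat; nra.
have [B [hB [hl hlt]]] := q_approx hn hA hd.
exists B; split => //; split => //.
have h0 := nu_ge0 (isT : (0 < 1)%N) (sa_congr HV X hB).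
have h1 := nu_congr hn (isT : (0 < 1)%N) hB hr.
have hrd : r * r * (eps / (r * r + 1)) < eps.
  rewrite /Rdiv -Rmult_assoc; apply: (Rmult_lt_reg_r (r * r + 1)); first nra.
  by field_simplify; nra.
rewrite hq Rplus_0_l in hlt; rewrite Rabs_right; last lra.
by have : r * r * nu n B <= r * r * (eps / (r * r + 1)); [apply: Rmult_le_compat_l; nra | lra].
Qed.

Lemma q_null_col_congr_S n (A : mat QV n n) (B0 : mat V n n) : (0 < n)%N ->
  is_sa A -> q n A = 0 -> q n (mopp A) = 0 -> is_sa B0 -> lifts B0 A ->
  forall X : mat C n 1, S (congr X B0 ord0 ord0).
Proof.
move=> hn hA hq hqN hB0 l0 X.
have hNA := sa_mopp HQ hA.
have sa00 (M : mat V n n) : is_sa M -> Vsa (congr X M ord0 ord0).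
  by move=> hM; rewrite /Vsa (sa_entry (sa_congr HV X hM)).
apply: (proj1 (gauge_ideal_approx (proj2 HI) (sa00 _ hB0) _ _)) => e he.
- have [B [hB [l hlt]]] := q_null_col_congr_small X hn hA hq he.
  exists (congr X (madd B0 (mopp B)) ord0 ord0); split; last first.
    by rewrite (congr_madd HV) (congr_mopp HV) /madd /mopp (vsubKr HV) (m11_entry (congr X B)).
  split; last by apply: sa00; apply: (sa_madd HV hB0); exact: (sa_mopp HV).
  by apply: (S_congr HS) => i j; exact: (lifts_sub_S HV HS l0 l).
- have [C [hC [l hlt]]] := q_null_col_congr_small X hn hNA hqN he.
  exists (congr X (madd B0 C) ord0 ord0); split; last first.
    by rewrite (congr_madd HV) /madd (vaddKl HV) (m11_entry (congr X C)).
  split; last by apply: sa00; exact: (sa_madd HV hB0).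
  apply: (S_congr HS); apply: (lifts_mzero_S HV HS).
  by rewrite -(madd_mopp HQ A); exact: (lifts_madd HV HS l0 l).
Qed.

Lemma q_proper n (A : mat QV n n) : (0 < n)%N -> is_sa A ->
  q n A = 0 -> q n (mopp A) = 0 -> A = @mzero QV n.
Proof.
move=> hn hA hq hqN; have [B0 [hB0 l0]] := sa_lift_ex HV HS hA.
apply: (lifts_S_mzero HV HS l0); apply: (S_entries_of_col_congr HV HS).
exact: (q_null_col_congr_S hn hA hq hqN hB0 l0).
Qed.

End QuotientGauge.

Theorem theorem3p19 (V : starVS) (nu : forall n, mat V n n -> R) (S : V -> Prop) :
  LinfMOS nu -> LinfMOS_ideal nu S -> @LinfMOS (quotVS V S) (qgauge V S nu).
Proof.
move=> HL HI; split; first exact: (quot_starVS (proj1 HL) (proj1 HI)).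
split; last split.
- move=> n hn; split; last split; last split.
  + exact: q_ge0 HL HI n hn.
  + exact: q_add HL HI n hn.
  + by move=> t A ht; exact: q_scal HL HI n hn t A ht.
  + by move=> A; exact: q_proper HL HI n A hn.
- by move=> n k hn hk X A r; exact: q_congr HL HI n k X A r hn hk.
- by move=> n k hn hk A B; exact: q_dsum HL HI n k A B hn hk.
Qed.
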